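(* Fix any permutation $\pi_\alpha$ of $\mathcal{I}_L$ and, for each $m\in\mathcal{I}_L$, define the compressed codeword $$\delta_m=\Big(\sum_{k\in\mathcal{J}_{\pi_\alpha^{-1}(m)}} v_{m,k}\Big)\bmod \Lambda_{J_m^{\min}},$$ where $J_m^{\min}$ is the minimal element of $\mathcal{J}_{\pi_\alpha^{-1}(m)}$. Then this compression is information lossless: $(v_1,\dots,v_L)$ can be recovered exactly from $(\delta_1,\dots,\delta_L)$, i.e. $(v_1,\dots,v_L)$ is a deterministic function of $(\delta_1,\dots,\delta_L)$ (together with the known dithers $d_1,\dots,d_L$ and the fixed system parameters).
   Context: Notation: for a lattice $\Lambda\subset\mathbb{R}^n$, $Q_\Lambda(x)$ is the nearest point of $\Lambda$ to $x$ (ties broken by a fixed rule), $x\bmod\Lambda=x-Q_\Lambda(x)$, and $\mathcal{V}(\Lambda)=\{x:Q_\Lambda(x)=0\}$ is the fundamental Voronoi region. $\mathcal{I}_j=\{1,\dots,j\}$, $\mathcal{I}_0=\emptyset$, and for $\mathcal{S}\subseteq\mathcal{I}_L$, $\overline{\mathcal{S}}=\mathcal{I}_L\setminus\mathcal{S}$. Logarithms are base 2. Lattice chain (Construction A): $\gamma$ is a prime, $L,n,K$ are positive integers, $G\in\mathbb{F}_\gamma^{n\times K}$ has full column rank over $\mathbb{F}_\gamma$, $B\in\mathbb{R}^{n\times n}$ is invertible, and $g:\mathbb{F}_\gamma\to\{0,\dots,\gamma-1\}$ is the natural bijection applied entrywise. For integers $0\le i_1\le\cdots\le i_{2L}\le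 K$ and $k\in\mathcal{I}_{2L}$, let $G_k$ consist of the first $i_k$ columns of $G$ and $\Lambda_k=B\big(\gamma^{-1}g(\{G_kw:w\in\mathbb{F}_\gamma^{i_k}\})+\mathbb{Z}^n\big)$, so $\Lambda_1\subseteq\cdots\subseteq\Lambda_{2L}$. Write $\mathcal{V}_k=\mathcal{V}(\Lambda_k)$. Sources: $\pi$ is a permutation of $\mathcal{I}_{2L}$ with $\Lambda_{\pi(2l-1)}\subseteq\Lambda_{\pi(2l)}$ for all $l\in\mathcal{I}_L$; $\Lambda_{s,l}=\Lambda_{\pi(2l-1)}$ (shaping lattice), $\Lambda_{c,l}=\Lambda_{\pi(2l)}$ (coding lattice), codebook $\mathcal{C}_l=\Lambda_{c,l}\cap\mathcal{V}(\Lambda_{s,l})$. The codewords $t_1,\dots,t_L$ are independent with $t_l$ uniform on $\mathcal{C}_l$. Scalars $\beta_l>0$; dithers $d_l$ are uniform on $\mathcal{V}(\Lambda_{s,l})/\beta_l$, mutually independent and independent of the $t_l$. For $k\in\mathcal{I}_{2L-1}$, $\mathcal{L}_k=\{l\in\mathcal{I}_L:\Lambda_{s,l}\subseteq\Lambda_k\subseteq\Lambda_{k+1}\subseteq\Lambda_{c,l}\}$. Computed codewords: $A=(a_{ml})\in\mathbb{Z}^{L\times L}$ is an integer matrix whose reduction mod $\gamma$ is invertible over $\mathbb{F}_\gamma$. For $\mathcal{S},\mathcal{S}'\subseteq\mathcal{I}_L$, $A(\mathcal{S},\mathcal{S}')$ is the submatrix with rows in $\mathcal{S}$ and columns in $\mathcal{S}'$;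 ranks are computed over $\mathbb{F}_\gamma$ after reduction mod $\gamma$, and a matrix with no rows or no columns has rank $0$. For $m\in\mathcal{I}_L$, $v_m=\big(\sum_{l=1}^L a_{ml}(t_l-Q_{\Lambda_{s,l}}(t_l-\beta_l d_l))\big)\bmod\Lambda_1$ and, for $k\in\mathcal{I}_{2L-1}$, $v_{m,k}=Q_{\Lambda_{k+1}}(v_m)\bmod\Lambda_k$. Index sets: for a permutation $\pi_\alpha$ of $\mathcal{I}_L$, $\Pi_\alpha(\mathcal{S})=\{\pi_\alpha(i):i\in\mathcal{S}\}$, and for $m\in\mathcal{I}_L$, $\mathcal{J}_m=\{k\in\mathcal{I}_{2L-1}:\operatorname{rank}A(\Pi_\alpha(\overline{\mathcal{I}_{m-1}}),\mathcal{L}_k)=\operatorname{rank}A(\Pi_\alpha(\overline{\mathcal{I}_m}),\mathcal{L}_k)+1\}$. If $\mathcal{J}_{\pi_\alpha^{-1}(m)}$ is empty, $\delta_m:=0$. *)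

From HB Require Import structures.
From mathcomp Require Import all_boot all_order all_algebra all_fingroup.
From mathcomp Require Import zify.
From mathcomp Require Import boolp reals.
Set Implicit Arguments. Unset Strict Implicit. Unset Printing Implicit Defensive.
Import Order.TTheory GRing.Theory Num.Theory.
Local Open Scope ring_scope.

(* Conventions: all indices are 0-based.  Lattice index k = 0..2L-1 stands for
   Lambda_{k+1}; source index l : 'I_L stands for l+1; m : 'I_L stands for m+1. *)

Section Defs.
Variable R : realType.
Variable n : nat.
Local Notation vec := 'cV[R]_n.

(* Construction A lattice Lambda_k = B (gamma^{-1} g(C_k) + Z^n), where C_k is
   the code generated by the first i_k columns of G. *)
Definition inLat (gamma K : nat) (G : 'M['F_gamma]_(n, K)) (B : 'M[R]_n)
  (i : nat -> nat) (k : nat) (x : vec) : Prop :=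
  exists (w : 'cV['F_gamma]_K) (z : 'cV[int]_n),
    (forall j : 'I_K, (i k <= j)%N -> w j 0 = 0) /\
    x = B *m ((gamma%:R)^-1 *: map_mx (fun a : 'F_gamma => (nat_of_ord a)%:R) (G *m w)
              + map_mx (fun c : int => c%:~R) z).

Definition sqnorm (x : vec) : R := \sum_(j < n) (x j 0) ^+ 2.

(* Q is a nearest-point quantizer for the lattice P, with a tie-breaking rule that
   is compatible with lattice translations (V(P) is a fundamental region). *)
Definition is_nearest_quantizer (P : vec -> Prop) (Q : vec -> vec) : Prop :=
  [/\ forall x, P (Q x),
      forall x y, P y -> sqnorm (x - Q x) <= sqnorm (x - y)
    & forall x y, P y -> Q (x + y) = Q x + y].

Definition modL (Q : vec -> vec) (x : vec) : vec := x - Q x.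

Definition lat_sub (P1 P2 : vec -> Prop) : Prop := forall x, P1 x -> P2 x.

End Defs.

Lemma sh_lt (L : nat) (l : 'I_L) : (2 * l < 2 * L)%N.
Proof. have := ltn_ord l; lia. Qed.
Lemma co_lt (L : nat) (l : 'I_L) : (2 * l + 1 < 2 * L)%N.
Proof. have := ltn_ord l; lia. Qed.

(* shaping / coding lattice indices (0-based lattice indices) *)
Definition sh (L : nat) (pi : {perm 'I_(2 * L)}) (l : 'I_L) : nat :=
  nat_of_ord (pi (Ordinal (sh_lt l))).
Definition co (L : nat) (pi : {perm 'I_(2 * L)}) (l : 'I_L) : nat :=
  nat_of_ord (pi (Ordinal (co_lt l))).

Definition subrank (F : fieldType) (L : nat) (M : 'M[F]_L) (S S' : {set 'I_L}) : nat :=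
  \rank (mxsub (fun a : 'I_#|S| => enum_val a) (fun b : 'I_#|S'| => enum_val b) M).

Definition Ared (gamma L : nat) (A : 'M[int]_L) : 'M['F_gamma]_L :=
  map_mx (fun z : int => z%:~R) A.

Section System.
Variables (R : realType) (n L : nat).
Variable lat : nat -> 'cV[R]_n -> Prop.
Variable Q : nat -> 'cV[R]_n -> 'cV[R]_n.
Variable pi : {perm 'I_(2 * L)}.

Definition Lset (k : nat) : {set 'I_L} :=
  [set l : 'I_L | `[< lat_sub (lat (sh pi l)) (lat k) /\ lat_sub (lat k) (lat k.+1)
                    /\ lat_sub (lat k.+1) (lat (co pi l)) >]].

Variable gamma : nat.
Variable A : 'M[int]_L.
Variable palpha : {perm 'I_L}.

(* J_m (m 0-based); only k with k+1 < 2L, i.e. k in I_{2L-1} *)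
Definition Jset (m : 'I_L) : {set 'I_(2 * L)} :=
  [set k : 'I_(2 * L) | (k.+1 < 2 * L)%N &&
     (subrank (Ared gamma A) (palpha @: [set j : 'I_L | (m <= j)%N]) (Lset k) ==
      (subrank (Ared gamma A) (palpha @: [set j : 'I_L | (m < j)%N]) (Lset k)).+1)].

Variable beta : 'I_L -> R.

Definition vv (t d : 'I_L -> 'cV[R]_n) (m : 'I_L) : 'cV[R]_n :=
  modL (Q 0) (\sum_(l < L) (A m l)%:~R *: (t l - Q (sh pi l) (t l - beta l *: d l))).

Definition vmk (t d : 'I_L -> 'cV[R]_n) (m : 'I_L) (k : nat) : 'cV[R]_n :=
  modL (Q k) (Q k.+1 (vv t d m)).

Definition delta (t d : 'I_L -> 'cV[R]_n) (m : 'I_L) : 'cV[R]_n :=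
  let J := Jset ((palpha^-1)%g m) in
  if J == set0 then 0
  else modL (Q (\big[minn/(2 * L)%N]_(k in J) (nat_of_ord k)))
            (\sum_(k in J) vmk t d m k).

End System.

From HB Require Import structures.
From mathcomp Require Import all_boot all_order all_algebra all_fingroup.
From mathcomp Require Import boolp reals.
From mathcomp Require Import zify.
Import Order.TTheory GRing.Theory Num.Theory.
Local Open Scope ring_scope.
Set Implicit Arguments. Unset Strict Implicit. Unset Printing Implicit Defensive.

(* Let e_l be the difference of the two dithered codewords of source l: it lies in
   the coding lattice Lambda_{c,l}, and it vanishes once it lies in the shaping
   lattice Lambda_{s,l}, since both codewords are in V(Lambda_{s,l}).  By descending
   induction on k, every e_l lies in Lambda_k.  Assume all e_l are in Lambda_{k+1}.
   For l outside L_k, the nesting of the chain already gives e_l in Lambda_k.  If k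
   belongs to the index set of m, then modulo Lambda_k the layers v_{m,j}, j < k,
   vanish, those with j > k are unchanged, and delta_m = delta'_m forces
   sum_l a_ml e_l into Lambda_k.  The rank condition defining these index sets
   makes the selected rows of A, restricted to the columns L_k, left invertible
   mod gamma, and gamma Lambda_{k+1} is in Lambda_k, so e_l is in Lambda_k for
   l in L_k too.  At the bottom, v_m and v'_m differ by an element of Lambda_1. *)

Section ConstructionA.
Variables (R : realType) (n gamma K : nat) (G : 'M['F_gamma]_(n, K)) (B : 'M[R]_n).
Variables (i : nat -> nat).
Hypothesis gamma_prime : prime gamma.

Local Notation intRmx := (map_mx (fun c : int => (c%:~R : R))).

(* [Lambda_k = B gamma^-1 y] with [y] integral and [y mod gamma] in the code C_k:
   unlike [inLat], this description is visibly closed under addition. *)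
Definition inLat_red (k : nat) (x : 'cV[R]_n) : Prop :=
  exists (w : 'cV['F_gamma]_K) (y : 'cV[int]_n),
  [/\ forall j : 'I_K, (i k <= j)%N -> w j 0 = 0,
      map_mx (fun c : int => (c%:~R : 'F_gamma)) y = G *m w &
      x = B *m ((gamma%:R)^-1 *: intRmx y)].

Let gammaR_neq0 : (gamma%:R : R) != 0.
Proof. by rewrite pnatr_eq0 -lt0n prime_gt0. Qed.

Let intr_nat (T : pzRingType) (m : nat) : ((m%:Z)%:~R : T) = m%:R.
Proof. by []. Qed.

Lemma inLat_redE k x : inLat G B i k x <-> inLat_red k x.
Proof.
split=> [[w [z [w_supp ->]]] | [w [y [w_supp y_red ->]]]].
  exists w, (\matrix_(a, b) ((nat_of_ord ((G *m w) a b))%:Z + gamma%:Z * z a b)).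
  split=> //.
    apply/matrixP => a b; rewrite !mxE intrD intrM !intr_nat pchar_Fp_0 //.
    by rewrite mul0r addr0 natr_Zp.
  congr (B *m _); apply/matrixP => a b; rewrite !mxE intrD intrM !intr_nat.
  by rewrite mulrDr mulrA mulVf // mul1r.
have gamma_dvd a b : (gamma%:Z %| y a b - (nat_of_ord ((G *m w) a b))%:Z)%Z.
  rewrite (dvdz_pcharf (pchar_Fp gamma_prime)) rmorphB /= intr_nat natr_Zp.
  by move/matrixP: y_red => /(_ a b); rewrite mxE => ->; rewrite subrr.
set Gw := G *m w in gamma_dvd.
exists w, (\matrix_(a, b) ((y a b - (nat_of_ord (Gw a b))%:Z) %/ gamma%:Z)%Z).
split=> //; congr (B *m _); apply/matrixP => a b; rewrite !mxE.
rewrite -{1}(subrK ((nat_of_ord (Gw a b))%:Z) (y a b)) -(divzK (gamma_dvd a b)).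
rewrite intrD intrM !intr_nat mulrDr mulrCA mulVf // mulr1 addrC.
by rewrite /Gw !mxE.
Qed.

Lemma inLat0 k : inLat G B i k 0.
Proof.
apply/inLat_redE; exists 0, 0; split=> [j _||]; first by rewrite mxE.
  by rewrite mulmx0; apply/matrixP => a b; rewrite !mxE.
rewrite (_ : intRmx 0 = 0) ?scaler0 ?mulmx0 //.
by apply/matrixP => a b; rewrite !mxE.
Qed.

Lemma inLatB k x x' : inLat G B i k x -> inLat G B i k x' -> inLat G B i k (x - x').
Proof.
move=> /inLat_redE [w [y [w_supp y_red ->]]] /inLat_redE [w' [y' [w'_supp y'_red ->]]].
apply/inLat_redE; exists (w - w'), (y - y'); split.
- by move=> j le_j; rewrite !mxE w_supp ?w'_supp ?subrr.
- by rewrite mulmxBr -y_red -y'_red; apply/matrixP => a b; rewrite !mxE intrB.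
- rewrite -mulmxBr -scalerBr; congr (B *m (_ *: _)).
  by apply/matrixP => a b; rewrite !mxE intrB.
Qed.

Lemma inLat_le k k' x : (i k <= i k')%N -> inLat G B i k x -> inLat G B i k' x.
Proof.
move=> le_k /inLat_redE [w [y [w_supp y_red ->]]]; apply/inLat_redE.
by exists w, y; split=> // j le_j; apply: w_supp; apply: leq_trans le_j.
Qed.

Lemma inLat_gamma k k' x : inLat G B i k x -> inLat G B i k' (gamma%:R *: x).
Proof.
move=> /inLat_redE [w [y [_ _ ->]]]; apply/inLat_redE.
exists 0, (gamma%:Z *: y); split=> [j _||]; first by rewrite mxE.
  rewrite mulmx0; apply/matrixP => a b; rewrite !mxE intrM.
  by rewrite intr_nat pchar_Fp_0 // mul0r.
rewrite scalemxAr scalerA mulrC; congr (B *m _); apply/matrixP => a b.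
by rewrite !mxE intrM intr_nat mulrA mulVf // mul1r.
Qed.

End ConstructionA.

Section IndicatorMatrices.
Variables (F : fieldType) (L : nat).

Definition indic_mx (T : {set 'I_L}) : 'M[F]_L := diag_mx (\row_a ((a \in T)%:R)).

Lemma mul_indic_mx T p (Y : 'M[F]_(L, p)) :
  indic_mx T *m Y = \matrix_(a, b) ((a \in T)%:R * Y a b).
Proof. by rewrite mul_diag_mx; apply/matrixP => a b; rewrite !mxE. Qed.

Lemma row_indic_mx T p (Y : 'M[F]_(L, p)) a :
  row a (indic_mx T *m Y) = if a \in T then row a Y else 0.
Proof.
apply/rowP => b; rewrite mul_indic_mx !mxE.
by case: (a \in T); rewrite ?mul1r ?mul0r ?mxE.
Qed.

Lemma indic_mxT : indic_mx setT = 1%:M.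
Proof. by apply/matrixP => a b; rewrite !mxE inE mulr1n. Qed.

Lemma indic_mx0 : indic_mx set0 = 0.
Proof. by apply/matrixP => a b; rewrite !mxE inE mul0rn. Qed.

Lemma indic_mxU (T U : {set 'I_L}) :
  [disjoint T & U] -> indic_mx (T :|: U) = indic_mx T + indic_mx U.
Proof.
move=> /pred0P TU0; apply/matrixP => a b; rewrite !mxE in_setU -mulrnDl.
have := TU0 a; rewrite /= -in_setI inE.
by case: (a \in T) (a \in U) => -[]; rewrite /= ?addr0 ?add0r.
Qed.

Lemma indic_mxM (T U : {set 'I_L}) : indic_mx T *m indic_mx U = indic_mx (T :&: U).
Proof.
rewrite mul_indic_mx; apply/matrixP => a b; rewrite !mxE in_setI.
by case: (a \in T); rewrite ?mul1r ?mul0r ?mul0rn.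
Qed.

Lemma indic_mxS (T U : {set 'I_L}) p (Y : 'M[F]_(L, p)) :
  T \subset U -> (indic_mx T *m Y <= indic_mx U *m Y)%MS.
Proof. by move=> /setIidPl TU; rewrite -TU -indic_mxM -mulmxA submxMl. Qed.

Lemma rank_indic_mx1 a p (Y : 'M[F]_(L, p)) : (\rank (indic_mx [set a] *m Y) <= 1)%N.
Proof.
have -> : indic_mx [set a] = delta_mx a a.
  apply/matrixP => b c; rewrite !mxE inE.
  by case: (eqVneq b a) => [->|]; rewrite /= ?mul0rn // eq_sym.
by rewrite (leq_trans (mxrankM_maxl _ _)) // mxrank_delta.
Qed.

Lemma rank_rowsub_enum (T : {set 'I_L}) p (Y : 'M[F]_(L, p)) :
  \rank (rowsub (fun a : 'I_#|T| => enum_val a) Y) = \rank (indic_mx T *m Y).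
Proof.
apply/eqP; rewrite eqn_leq !mxrankS //; apply/row_subP => a.
  rewrite row_indic_mx; case: ifP => Ta; last by rewrite sub0mx.
  by rewrite -(enum_rankK_in Ta Ta) -(row_rowsub (fun a : 'I_#|T| => enum_val a)) row_sub.
have := row_indic_mx T Y (enum_val a); rewrite enum_valP row_rowsub => <-.
exact: row_sub.
Qed.

Lemma subrank_indic_mx (M : 'M[F]_L) T S :
  subrank M T S = \rank (indic_mx T *m (M *m indic_mx S)).
Proof.
rewrite /subrank mxsubrc rank_rowsub_enum mulmx_colsub -mxrank_tr.
rewrite (_ : (colsub _ _)^T = rowsub (fun b : 'I_#|S| => enum_val b) (indic_mx T *m M)^T).
  by rewrite rank_rowsub_enum -mxrank_tr trmx_mul trmxK tr_diag_mx mulmxA.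
by apply/matrixP => a b; rewrite !mxE.
Qed.

End IndicatorMatrices.

Section RankDrops.
Variables (F : fieldType) (L p : nat) (N : 'M[F]_(L, p)) (pa : {perm 'I_L}).

Definition suffix_set (j : nat) : {set 'I_L} := pa @: [set j' : 'I_L | (j <= j')%N].

Lemma suffix_setS (jo : 'I_L) : suffix_set jo = pa jo |: suffix_set jo.+1.
Proof.
rewrite /suffix_set -imsetU1; congr imset.
suff -> : [set j' : 'I_L | (jo <= j')%N] = jo |: [set j' : 'I_L | (jo < j')%N] by [].
by apply/setP => j; rewrite !inE leq_eqVlt val_eqE eq_sym.
Qed.

Lemma notin_suffix_setS (jo : 'I_L) : pa jo \notin suffix_set jo.+1.
Proof. by rewrite mem_imset ?inE ?ltnn //; apply: perm_inj. Qed.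

Lemma suffix_set0 : suffix_set 0 = setT.
Proof.
apply/setP => a; rewrite inE; apply/imsetP; exists (pa^-1 a)%g; first by rewrite inE.
by rewrite permKV.
Qed.

Lemma suffix_set_ge j : (L <= j)%N -> suffix_set j = set0.
Proof.
move=> le_Lj; apply/setP => a; rewrite inE; apply/imsetP => -[b]; rewrite inE => le_jb.
by have := leq_trans le_Lj le_jb; rewrite leqNgt ltn_ord.
Qed.

Local Notation rowsN T := (indic_mx F T *m N).

Lemma rowsN_suffix_setS (jo : 'I_L) :
  rowsN (suffix_set jo) = rowsN [set pa jo] + rowsN (suffix_set jo.+1).
Proof.
rewrite {1}suffix_setS indic_mxU ?mulmxDl // disjoints1.
exact: notin_suffix_setS.
Qed.

Lemma rank_suffix_setS (jo : 'I_L) :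
  (\rank (rowsN (suffix_set jo.+1)) <= \rank (rowsN (suffix_set jo))
                                  <= (\rank (rowsN (suffix_set jo.+1))).+1)%N.
Proof.
rewrite mxrankS ?indic_mxS //=; last by rewrite suffix_setS subsetUr.
rewrite rowsN_suffix_setS.
rewrite (leq_trans (mxrankS (addmx_sub_adds (submx_refl _) (submx_refl _)))) //.
rewrite (leq_trans (mxrank_adds_leqif _ _).1) // addnC.
by rewrite -[X in (_ <= X)%N]addn1 leq_add2l rank_indic_mx1.
Qed.

Variable I : {set 'I_L}.

(* Passing from [suffix_set jo.+1] to [suffix_set jo] adds the single row [pa jo],
   so the rank grows by 0 or 1; the rows where it grows span all the others. *)
Hypothesis rank_growth_in_I : forall jo : 'I_L, jo \notin I ->
  \rank (rowsN (suffix_set jo)) != (\rank (rowsN (suffix_set jo.+1))).+1.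

Local Notation spanned j :=
  (rowsN (suffix_set j) <= rowsN (suffix_set j :&: pa @: I))%MS.

Lemma spanned_suffix_setS (jo : 'I_L) : spanned jo.+1 -> spanned jo.
Proof.
move=> spanS.
have subI : suffix_set jo.+1 :&: pa @: I \subset suffix_set jo :&: pa @: I.
  by rewrite setSI // suffix_setS subsetUr.
case: (boolP (jo \in I)) => [jo_I | /rank_growth_in_I rank_eq].
  rewrite rowsN_suffix_setS (submx_trans (addmx_sub_adds (submx_refl _) spanS)) //.
  rewrite addsmx_sub !indic_mxS // sub1set inE suffix_setS setU11.
  exact: imset_f.
apply: submx_trans (submx_trans spanS (indic_mxS _ subI)).
have sub_rows : (rowsN (suffix_set jo.+1) <= rowsN (suffix_set jo))%MS.
  by rewrite indic_mxS // suffix_setS subsetUr.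
have /andP [le_rk rk_le] := rank_suffix_setS jo.
by rewrite -(mxrank_leqif_sup sub_rows).2 eqn_leq le_rk -ltnS ltn_neqAle rank_eq rk_le.
Qed.

Lemma spanned_suffix_set j : (j <= L)%N -> spanned j.
Proof.
move=> le_jL; rewrite -(subKn le_jL); elim: (L - j)%N (leq_subr j L) => [|d IH] le_dL.
  by rewrite subn0 suffix_set_ge // indic_mx0 mul0mx sub0mx.
have lt_jo : (L - d.+1 < L)%N by lia.
have := @spanned_suffix_setS (Ordinal lt_jo); rewrite /= subnSK //; apply.
exact: IH (ltnW le_dL).
Qed.

Lemma rows_in_I_span : (N <= rowsN (pa @: I))%MS.
Proof.
by have := spanned_suffix_set (leq0n L); rewrite suffix_set0 setTI indic_mxT mul1mx.
Qed.

End RankDrops.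

Lemma rank_growth_left_inverse (F : fieldType) (L : nat) (A : 'M[F]_L) (S : {set 'I_L})
    (pa : {perm 'I_L}) (I : {set 'I_L}) :
  A \in unitmx ->
  (forall jo : 'I_L, jo \notin I ->
    \rank (indic_mx F (suffix_set pa jo) *m (A *m indic_mx F S))
      != (\rank (indic_mx F (suffix_set pa jo.+1) *m (A *m indic_mx F S))).+1) ->
  exists X : 'M[F]_L, forall l l', l \in S -> l' \in S ->
    \sum_(m in pa @: I) X l m * A m l' = (l == l')%:R.
Proof.
move=> A_unit rank_growth.
have S_in_AS : (indic_mx F S <= A *m indic_mx F S)%MS.
  by rewrite -{1}(mulKmx A_unit (indic_mx F S)) submxMl.
have /submxP [X eqX] := submx_trans S_in_AS (rows_in_I_span rank_growth).
exists X => l l' Sl Sl'; move/matrixP: eqX => /(_ l l').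
rewrite mul_mx_diag mul_indic_mx !mxE Sl mulr1n => ->.
rewrite big_mkcond /=; apply: eq_bigr => m _; rewrite !mxE Sl' mulr1.
by case: (m \in _); rewrite ?mul1r ?mul0r ?mulr0.
Qed.

Lemma subrACA (V : zmodType) (a b c e : V) : (a - b) - (c - e) = (a - c) - (b - e).
Proof. by rewrite opprD addrACA -opprD. Qed.

Lemma mix_sub_delta (F : pzRingType) (V : lmodType F) (L : nat) (S M : {set 'I_L})
    (a : 'I_L -> 'I_L -> int) (c : 'I_L -> int) (e : 'I_L -> V) l :
  l \in S ->
  \sum_(m in M) (c m)%:~R *: \sum_(l' in S) (a m l')%:~R *: e l' - e l
  = \sum_(l' in S) (\sum_(m in M) c m * a m l' - (l == l')%:Z)%:~R *: e l'.
Proof.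
move=> Sl; rewrite (eq_bigr (fun m => \sum_(l' in S) ((c m * a m l')%:~R *: e l'))); last first.
  by move=> m _; rewrite scaler_sumr; apply: eq_bigr => l' _; rewrite scalerA intrM.
rewrite exchange_big (bigD1 l Sl) [in RHS](bigD1 l Sl) /= eqxx.
rewrite addrAC; congr (_ + _).
  by rewrite intrB scalerBl scale1r -scaler_suml mulrz_sumr.
apply: eq_bigr => l' /andP [_ l'_neq]; rewrite eq_sym (negPf l'_neq) subr0.
by rewrite mulrz_sumr scaler_suml.
Qed.

Section QuantizerChain.
Variables (R : realType) (n L : nat) (lat : nat -> 'cV[R]_n -> Prop).
Variable Q : nat -> 'cV[R]_n -> 'cV[R]_n.
Local Notation N := (2 * L)%N.
Hypotheses (lat0 : forall k, lat k 0)
  (latB : forall k x y, lat k x -> lat k y -> lat k (x - y))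
  (lat_le : forall a b x, (a <= b)%N -> (b < N)%N -> lat a x -> lat b x)
  (Q_lat : forall k x, (k < N)%N -> lat k (Q k x))
  (Q_shift : forall k x y, (k < N)%N -> lat k y -> Q k (x + y) = Q k x + y).

Lemma latN k x : lat k x -> lat k (- x).
Proof. by move=> ?; rewrite -sub0r; apply: latB. Qed.

Lemma latD k x y : lat k x -> lat k y -> lat k (x + y).
Proof. by move=> ? ?; rewrite -[y]opprK; apply/latB/latN. Qed.

Lemma lat_sum k (I : Type) (r : seq I) (P : pred I) (F : I -> 'cV[R]_n) :
  (forall j, P j -> lat k (F j)) -> lat k (\sum_(j <- r | P j) F j).
Proof. by move=> ?; apply: (big_ind (lat k)) => //; apply: latD. Qed.

Lemma latZint k (c : int) x : lat k x -> lat k (c%:~R *: x).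
Proof.
move=> lat_x; rewrite scaler_int.
have latMn m : lat k (x *+ m) by elim: m => [|m ?]; rewrite ?mulr0n ?mulrS //; apply: latD.
by case: c => m; rewrite ?NegzE ?mulrNz; [exact: latMn | apply/latN/latMn].
Qed.

Lemma modL_shift k x y : (k < N)%N -> lat k y -> modL (Q k) (x + y) = modL (Q k) x.
Proof. by move=> lt_k lat_y; rewrite /modL Q_shift // opprD addrACA subrr addr0. Qed.

Definition layer (v : 'cV[R]_n) (k : nat) : 'cV[R]_n := modL (Q k) (Q k.+1 v).

(* For [v = v_m], [layer v k] is v_{m,k+1} and, when J is nonempty,
   [compress J v] is delta_m (lattice indices are 0-based). *)
Definition compress (J : {set 'I_N}) (v : 'cV[R]_n) : 'cV[R]_n :=
  modL (Q (\big[minn/N]_(k in J) (nat_of_ord k))) (\sum_(k in J) layer v k).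

Lemma layer_lat k v : (k.+1 < N)%N -> lat k.+1 (layer v k).
Proof.
move=> lt_k; apply: latB; first exact: Q_lat.
by apply: (lat_le (leqnSn k) lt_k); apply: Q_lat; lia.
Qed.

Lemma layer_shift j k v D : (j.+1 < N)%N -> (k.+1 < N)%N -> lat k.+1 D ->
  lat k (layer (v + D) j - layer v j - (if j == k then D else 0)).
Proof.
move=> lt_j lt_k lat_D; have lt_jN : (j < N)%N by lia.
case: (ltngtP j k) => [lt_jk | lt_kj | ->].
- by rewrite subr0; apply: latB; apply: (lat_le lt_jk (ltnW lt_k)); apply: layer_lat.
- rewrite /layer (Q_shift _ lt_j (lat_le (leqW lt_kj) lt_j lat_D)).
  by rewrite modL_shift ?subrr ?subr0 //; apply: (lat_le lt_kj lt_jN).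
- rewrite /layer (Q_shift _ lt_k lat_D) /modL subrACA (addrC _ D) addrK.
  rewrite addrAC subrr sub0r opprB.
  by apply: latB; apply: Q_lat; apply: ltnW.
Qed.

Lemma compress_shift (J : {set 'I_N}) (ko : 'I_N) v D :
  ko \in J -> (forall j : 'I_N, j \in J -> (j.+1 < N)%N) -> lat ko.+1 D ->
  lat ko (compress J (v + D) - compress J v - D).
Proof.
move=> J_ko J_lt lat_D; have lt_ko := J_lt _ J_ko.
set jm := \big[minn/N]_(k in J) (nat_of_ord k).
have le_jm : (jm <= ko)%N := bigmin_le_cond N (fun k : 'I_N => nat_of_ord k) J_ko.
have sum_shift : lat ko (\sum_(j in J) layer (v + D) j - \sum_(j in J) layer v j - D).
  rewrite -sumrB (bigD1 ko J_ko) /= addrAC; apply: latD.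
    by have := layer_shift v lt_ko lt_ko lat_D; rewrite eqxx.
  apply: lat_sum => j /andP [J_j j_neq].
  by have := layer_shift v (J_lt j J_j) lt_ko lat_D; rewrite val_eqE (negPf j_neq) subr0.
rewrite /compress /modL -/jm subrACA addrAC; apply: latB => //.
have lt_jm : (jm < N)%N by apply: leq_ltn_trans le_jm _.
by apply: latB; apply: (lat_le le_jm (ltn_ord ko)); apply: Q_lat.
Qed.

Lemma compress_eq_lat (J : {set 'I_N}) (ko : 'I_N) v v' :
  ko \in J -> (forall j : 'I_N, j \in J -> (j.+1 < N)%N) -> lat ko.+1 (v - v') ->
  compress J v = compress J v' -> lat ko (v - v').
Proof.
move=> J_ko J_lt lat_vv' eq_c; have := compress_shift v' J_ko J_lt lat_vv'.
by rewrite subrKC eq_c subrr sub0r => /latN; rewrite opprK.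
Qed.

Section Lossless.
Variables (pi : {perm 'I_N}) (gamma : nat) (A : 'M[int]_L) (palpha : {perm 'I_L}).
Variables (beta : 'I_L -> R) (d t t' : 'I_L -> 'cV[R]_n).
Hypotheses (L_gt0 : (0 < L)%N) (gamma_prime : prime gamma)
  (lat_gamma : forall k x, (k < N)%N -> lat k x -> lat 0 (gamma%:R *: x))
  (shaping_sub_coding : forall l, lat_sub (lat (sh pi l)) (lat (co pi l)))
  (A_unit : Ared gamma A \in unitmx)
  (t_code : forall l, lat (co pi l) (t l) /\ Q (sh pi l) (t l) = 0)
  (t'_code : forall l, lat (co pi l) (t' l) /\ Q (sh pi l) (t' l) = 0)
  (delta_eq : forall m, delta lat Q pi gamma A palpha beta t d m =
                        delta lat Q pi gamma A palpha beta t' d m).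

Let sh_ltN l : (sh pi l < N)%N. Proof. exact: ltn_ord. Qed.
Let co_ltN l : (co pi l < N)%N. Proof. exact: ltn_ord. Qed.

Lemma lat_dvd_gamma k k' (c : int) x : (k < N)%N -> (k' < N)%N -> lat k x ->
  (c%:~R : 'F_gamma) = 0 -> lat k' (c%:~R *: x).
Proof.
move=> lt_k lt_k' lat_x /eqP; rewrite -(dvdz_pcharf (pchar_Fp gamma_prime)) => /divzK <-.
rewrite intrM -scalerA; apply: latZint; apply: (lat_le (leq0n k') lt_k').
exact: lat_gamma lt_k lat_x.
Qed.

Definition dithered (s : 'I_L -> 'cV[R]_n) (l : 'I_L) : 'cV[R]_n :=
  s l - Q (sh pi l) (s l - beta l *: d l).

Definition mixed (s : 'I_L -> 'cV[R]_n) (m : 'I_L) : 'cV[R]_n :=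
  \sum_(l < L) (A m l)%:~R *: dithered s l.

Definition err (l : 'I_L) : 'cV[R]_n := dithered t l - dithered t' l.

Definition err_mix (m : 'I_L) : 'cV[R]_n := \sum_(l < L) (A m l)%:~R *: err l.

Lemma mixedB m : mixed t m - mixed t' m = err_mix m.
Proof. by rewrite /err_mix /mixed -sumrB; apply: eq_bigr => l _; rewrite -scalerBr. Qed.

Lemma err_coding l : lat (co pi l) (err l).
Proof.
have Q_coding s : lat (co pi l) (Q (sh pi l) s) by apply: shaping_sub_coding; apply: Q_lat.
have [t_coding _] := t_code l; have [t'_coding _] := t'_code l.
by apply: latB; apply: latB.
Qed.

Lemma err_shaping_eq0 l : lat (sh pi l) (err l) -> err l = 0.
Proof.
move=> lat_err; have lat_tt' : lat (sh pi l) (t l - t' l).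
  rewrite -[_ - _](subrK (Q (sh pi l) (t l - beta l *: d l)
                           - Q (sh pi l) (t' l - beta l *: d l))).
  by rewrite -subrACA; apply: latD => //; apply: latB; apply: Q_lat.
have := Q_shift (t' l) (ltn_ord _) lat_tt'.
rewrite subrKC (t_code l).2 (t'_code l).2 add0r => /esym/eqP; rewrite subr_eq0 => /eqP eq_t.
by rewrite /err /dithered eq_t subrr.
Qed.

Lemma vv_sub_err_mix k m : (k < N)%N ->
  lat k (vv Q pi A beta t d m - vv Q pi A beta t' d m - err_mix m).
Proof.
move=> lt_k; rewrite -mixedB /vv /modL -/(mixed t m) -/(mixed t' m) subrACA.
rewrite (addrAC (mixed t m)) (addrAC (mixed t' m)) !subrr !sub0r.
by apply: latB; apply: latN; apply: (lat_le (leq0n k) lt_k); apply: Q_lat; lia.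
Qed.

Lemma notin_Lset l k : (k.+1 < N)%N -> l \notin Lset lat pi k ->
  (k < sh pi l)%N \/ (co pi l <= k)%N.
Proof.
move=> lt_k; case: (ltnP k (sh pi l)) => [|le_sh]; first by left.
case: (leqP (co pi l) k) => [|lt_co]; first by right.
rewrite inE => /asboolP []; split; [|split] => x.
- exact: (lat_le le_sh (ltnW lt_k)).
- exact: (lat_le (leqnSn k) lt_k).
- exact: (lat_le lt_co (co_ltN l)).
Qed.

Section Descent.
Variable k : nat.
Hypotheses (lt_k : (k.+1 < N)%N) (err_up : forall l, lat k.+1 (err l)).
Let ko : 'I_N := Ordinal (ltnW lt_k).

Lemma err_notin_Lset l : l \notin Lset lat pi k -> lat k (err l).
Proof.
case/(notin_Lset lt_k) => [lt_sh | le_co].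
  by rewrite err_shaping_eq0 //; apply: (lat_le lt_sh (sh_ltN l) (err_up l)).
exact: (lat_le le_co (ltnW lt_k) (err_coding l)).
Qed.

Lemma err_mix_J m :
  ko \in Jset lat pi gamma A palpha ((palpha^-1)%g m) -> lat k (err_mix m).
Proof.
move=> J_ko; set J := Jset _ _ _ _ _ _ in J_ko.
have J_lt (j : 'I_N) : j \in J -> (j.+1 < N)%N by rewrite inE => /andP [].
have lat_up : lat k.+1 (vv Q pi A beta t d m - vv Q pi A beta t' d m).
  rewrite -(subrK (err_mix m) (_ - _)); apply: latD (vv_sub_err_mix _ lt_k) _.
  by apply: lat_sum => l _; apply/latZint/err_up.
have J_neq0 : (J == set0) = false by apply/negbTE/set0Pn; exists ko.
have eq_c : compress J (vv Q pi A beta t d m) = compress J (vv Q pi A beta t' d m).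
  by have := delta_eq m; rewrite /delta /= -/J J_neq0.
have lat_vv := compress_eq_lat J_ko J_lt lat_up eq_c.
by have := latB lat_vv (vv_sub_err_mix m (ltnW lt_k)); rewrite subKr.
Qed.

Lemma err_mix_Lset m : m \in palpha @: [set j | ko \in Jset lat pi gamma A palpha j] ->
  lat k (\sum_(l in Lset lat pi k) (A m l)%:~R *: err l).
Proof.
case/imsetP => j; rewrite inE -{1}(permK palpha j) => /err_mix_J lat_mix ->.
have lat_out : lat k (\sum_(l < L | l \notin Lset lat pi k) (A (palpha j) l)%:~R *: err l).
  by apply: lat_sum => l ?; apply/latZint/err_notin_Lset.
by have := latB lat_mix lat_out; rewrite /err_mix (bigID (mem (Lset lat pi k))) /= addrK.
Qed.

(* A left inverse X of the rows [palpha @: I] of A on the columns L_k, computed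
   mod gamma, recovers e_l up to a combination of the e_l' with coefficients
   divisible by gamma, and such a combination of vectors of Lambda_{k+1} lies in
   Lambda_k. *)
Lemma err_in_Lset l : l \in Lset lat pi k -> lat k (err l).
Proof.
move=> S_l; set S := Lset lat pi k in S_l *.
set I := [set j | ko \in Jset lat pi gamma A palpha j].
have rank_growth (jo : 'I_L) : jo \notin I ->
    \rank (indic_mx _ (suffix_set palpha jo) *m (Ared gamma A *m indic_mx _ S))
    != (\rank (indic_mx _ (suffix_set palpha jo.+1) *m (Ared gamma A *m indic_mx _ S))).+1.
  by rewrite inE /Jset inE /= lt_k /= -!subrank_indic_mx.
have [X invX] := rank_growth_left_inverse A_unit rank_growth.
pose c m := (nat_of_ord (X l m))%:Z.
set comb := \sum_(m in palpha @: I) (c m)%:~R *: \sum_(l' in S) (A m l')%:~R *: err l'.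
have lat_comb : lat k comb by apply: lat_sum => m ?; apply/latZint/err_mix_Lset.
have lat_defect : lat k (comb - err l).
  rewrite mix_sub_delta //; apply: lat_sum => l' S_l'.
  apply: (lat_dvd_gamma _ (ltnW lt_k) (err_up l')) => //.
  rewrite rmorphB rmorph_sum /= -[RHS](subrr ((l == l')%:R : 'F_gamma)).
  rewrite -{1}(invX l l' S_l S_l').
  congr (_ - _); apply: eq_bigr => m _; rewrite rmorphM /= mxE; congr (_ * _).
  exact: natr_Zp.
by have := latB lat_comb lat_defect; rewrite subKr.
Qed.

Lemma err_descend l : lat k (err l).
Proof. by case: (boolP (l \in Lset lat pi k)) => [/err_in_Lset | /err_notin_Lset]. Qed.

End Descent.

Lemma err_lat0 l : lat 0 (err l).
Proof.
have lt_top : (N.-1 < N)%N by lia.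
suff err_lat j : (j <= N.-1)%N -> forall l, lat (N.-1 - j) (err l).
  by rewrite -(subnn N.-1); apply: err_lat.
elim: j => [|j IH] le_j l'.
  by rewrite subn0; apply: (lat_le _ lt_top (err_coding l')); have := co_ltN l'; lia.
apply: err_descend => [|l'']; first lia.
by rewrite subnSK //; apply: IH; lia.
Qed.

Theorem compression_lossless m : vv Q pi A beta t d m = vv Q pi A beta t' d m.
Proof.
rewrite /vv -/(mixed t m) -/(mixed t' m) -(subrK (mixed t' m) (mixed t m)) mixedB addrC.
by rewrite modL_shift //; [lia | apply: lat_sum => l _; apply/latZint/err_lat0].
Qed.

End Lossless.
End QuantizerChain.

Theorem theorem1 (R : realType) (gamma L n K : nat)
  (G : 'M['F_gamma]_(n, K)) (B : 'M[R]_n) (i : nat -> nat)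
  (Q : nat -> 'cV[R]_n -> 'cV[R]_n)
  (pi : {perm 'I_(2 * L)}) (palpha : {perm 'I_L})
  (A : 'M[int]_L) (beta : 'I_L -> R) :
  prime gamma -> (0 < L)%N -> (0 < n)%N -> (0 < K)%N ->
  \rank G = K -> B \in unitmx ->
  (forall k, (k.+1 < 2 * L)%N -> (i k <= i k.+1)%N) -> (i (2 * L).-1 <= K)%N ->
  (forall k, (k < 2 * L)%N -> is_nearest_quantizer (inLat G B i k) (Q k)) ->
  (forall l : 'I_L, lat_sub (inLat G B i (sh pi l)) (inLat G B i (co pi l))) ->
  Ared gamma A \in unitmx ->
  (forall l, 0 < beta l) ->
  forall d t t' : 'I_L -> 'cV[R]_n,
  (forall l, Q (sh pi l) (beta l *: d l) = 0) ->
  (forall l, inLat G B i (co pi l) (t l) /\ Q (sh pi l) (t l) = 0) ->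
  (forall l, inLat G B i (co pi l) (t' l) /\ Q (sh pi l) (t' l) = 0) ->
  (forall m, delta (inLat G B i) Q pi gamma A palpha beta t d m =
             delta (inLat G B i) Q pi gamma A palpha beta t' d m) ->
  forall m, vv Q pi A beta t d m = vv Q pi A beta t' d m.
Proof.
move=> gamma_prime L_gt0 _ _ _ _ i_step _ Q_nearest sh_sub_co A_unit _ d t t' _.
have i_mono : {in [pred k | (k < 2 * L)%N] &, {homo i : a b / (a <= b)%N}}.
  apply: homo_leq_in => [//|a b c|a b lt_a lt_b c /andP [_ lt_cb]|a _]; rewrite ?inE.
  - exact: leq_trans.
  - exact: ltn_trans lt_cb lt_b.
  - exact: i_step.
apply: compression_lossless => //.
- exact: inLat0.
- exact: (inLatB gamma_prime).
- move=> a b x le_ab lt_b; apply: (inLat_le gamma_prime).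
  by apply: i_mono; rewrite ?inE //=; lia.
- by move=> k x lt_k; case: (Q_nearest k lt_k).
- by move=> k x y lt_k; case: (Q_nearest k lt_k) => _ _; apply.
- by move=> k x _; apply: (inLat_gamma gamma_prime).
Qed.
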